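(* Let $\alpha\in(1,\infty)$, let $p_X$ be a distribution on a finite set $\mathcal X$ and $p_{Y\mid X}$ a channel to a finite set $\mathcal Y$. Let $\tilde q^{(0)}_{Y\mid X}$ be an initial channel and for $k\ge0$ define $$r^{(k)}_{X\mid Y}(x\mid y)=\frac{p_X(x)\tilde q^{(k)}_{Y\mid X}(y\mid x)}{\sum_{x'}p_X(x')\tilde q^{(k)}_{Y\mid X}(y\mid x')},\qquad \tilde q^{(k+1)}_{Y\mid X}(y\mid x)=\frac{p_{Y\mid X}(y\mid x)r^{(k)}_{X\mid Y}(x\mid y)^{1-1/\alpha}}{\sum_{y'}p_{Y\mid X}(y'\mid x)r^{(k)}_{X\mid Y}(x\mid y')^{1-1/\alpha}}.$$ Let $\tilde q^{\mathrm{opt}}_{Y\mid X}$ be a channel achieving the maximum in $I_\alpha^{\mathrm C}(X;Y)=\max_{\tilde q_{Y\mid X}}\max_{r_{X\mid Y}}\tilde F_\alpha^{\mathrm C}(\tilde q_{Y\mid X},r_{X\mid Y})$. Then for every $k\ge0$, $$I_\alpha^{\mathrm C}(X;Y)-\tilde F_\alpha^{\mathrm C}(\tilde q^{(k+1)}_{Y\mid X},r^{(k)}_{X\mid Y})\le\frac{\alpha}{\alpha-1}\sum_{x,y}p_X(x)\tilde q^{\mathrm{opt}}_{Y\mid X}(y\mid x)\log\frac{\tilde q^{(k+1)}_{Y\mid X}(y\mid x)}{\tilde q^{(k)}_{Y\mid X}(y\mid x)}.$$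
   Context: $\log$ is natural, $D$ is the Kullback–Leibler divergence, and $D_\alpha(p\|q):=\frac{1}{\alpha-1}\log\sum_zp(z)^\alpha q(z)^{1-\alpha}$. The Augustin–Csiszár mutual information is $I_\alpha^{\mathrm C}(X;Y):=\min_{q_Y}\sum_xp_X(x)D_\alpha(p_{Y\mid X}(\cdot\mid x)\|q_Y)$. For a channel $\tilde q_{Y\mid X}$ and a reverse channel $r_{X\mid Y}$ (a family of distributions $r_{X\mid Y}(\cdot\mid y)$ on $\mathcal X$), $\tilde F_\alpha^{\mathrm C}(\tilde q_{Y\mid X},r_{X\mid Y}):=\frac{\alpha}{1-\alpha}D(p_X\tilde q_{Y\mid X}\|p_Xp_{Y\mid X})+\mathbb E^{p_X\tilde q_{Y\mid X}}[\log\frac{r_{X\mid Y}(X\mid Y)}{p_X(X)}]$; for $\alpha>1$ one has $I_\alpha^{\mathrm C}(X;Y)=\max_{\tilde q_{Y\mid X}}\max_{r_{X\mid Y}}\tilde F_\alpha^{\mathrm C}$. *)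

From HB Require Import structures.
From mathcomp Require Import all_boot all_order all_algebra.
From mathcomp Require Import all_classical all_reals all_analysis.
Set Implicit Arguments. Unset Strict Implicit. Unset Printing Implicit Defensive.
Import Order.TTheory GRing.Theory Num.Theory.
Local Open Scope ring_scope.

Section Defs.
Variables (R : realType) (X Y : finType).

Definition is_dist (T : finType) (p : T -> R) :=
  (forall t, 0 <= p t) /\ \sum_(t : T) p t = 1.

(* channel W : X -> Y -> R,  W x y = W(y|x) *)
Definition is_channel (W : X -> Y -> R) := forall x, is_dist (W x).

(* reverse channel r : Y -> X -> R,  r y x = r(x|y) *)
Definition is_revchannel (r : Y -> X -> R) := forall y, is_dist (r y).

(* D(p_X q || p_X W) with the convention 0 log(0/..) = 0 (terms with weight
   p x * q x y = 0 vanish); finite by the admissibility condition below. *)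
Definition KL_joint (p : X -> R) (q W : X -> Y -> R) : R :=
  \sum_(x : X) \sum_(y : Y) p x * q x y * ln (q x y / W x y).

Definition FC (a : R) (p : X -> R) (W q : X -> Y -> R) (r : Y -> X -> R) : R :=
  a / (1 - a) * KL_joint p q W
  + \sum_(x : X) \sum_(y : Y) p x * q x y * ln (r y x / p x).

(* (q, r) for which FC is finite (otherwise FC = -oo for a > 1):
   q << W and r > 0 on the support of p_X q. *)
Definition admissible (p : X -> R) (W q : X -> Y -> R) (r : Y -> X -> R) :=
  forall x y, 0 < p x -> 0 < q x y -> 0 < W x y /\ 0 < r y x.

Definition rev_of (p : X -> R) (q : X -> Y -> R) : Y -> X -> R :=
  fun y x => p x * q x y / \sum_(x' : X) p x' * q x' y.

Definition upd (a : R) (W : X -> Y -> R) (r : Y -> X -> R) : X -> Y -> R :=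
  fun x y => W x y * r y x `^ (1 - a^-1)
             / \sum_(y' : Y) W x y' * r y' x `^ (1 - a^-1).

Fixpoint qiter (a : R) (p : X -> R) (W q0 : X -> Y -> R) (k : nat)
  : X -> Y -> R :=
  match k with
  | 0 => q0
  | k'.+1 => upd a W (rev_of p (qiter a p W q0 k'))
  end.

End Defs.

From HB Require Import structures.
From mathcomp Require Import all_boot all_order all_algebra.
From mathcomp Require Import all_classical all_reals all_analysis.
From mathcomp Require Import ring lra.
Set Implicit Arguments. Unset Strict Implicit. Unset Printing Implicit Defensive.
Import Order.TTheory GRing.Theory Num.Theory.
Local Open Scope ring_scope.

(* Write K = a/(a-1), q = q^(k), r = r^(k), q' = q^(k+1) and m(y) = sum_x p(x) q(y|x).
   Since K (1 - 1/a) = 1, the update q'(y|x) = W(y|x) r(x|y)^(1-1/a) / Z(x) makes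
   F(q', r) collapse to sum_x p(x) (K ln Z(x) - ln p(x)), and expanding the
   logarithms shows that the gap K sum p qopt ln(q'/q) - (F(qopt, ropt) - F(q', r))
   is exactly (K - 1) D(p qopt || p q) + D(p qopt || m ropt).  Both divergences are
   nonnegative and K >= 1. *)

Section Divergence.
Variable R : realType.

Lemma subr_le_mul_ln_div (u v : R) : 0 < u -> 0 < v -> u - v <= u * ln (u / v).
Proof.
move=> u_gt0 v_gt0.
have vu_gt0 : 0 < v / u by exact: divr_gt0.
have ln_vu : ln (v / u) <= v / u - 1.
  by have := @le_ln1Dx R (v / u - 1); rewrite [1 + _]addrC subrK; apply; lra.
have -> : ln (u / v) = - ln (v / u) by rewrite !ln_div ?posrE //; ring.
have : u * ln (v / u) <= u * (v / u - 1) by rewrite ler_wpM2l // ltW.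
by rewrite mulrBr mulr1 mulrCA divff ?mulr1 ?gt_eqF //; lra.
Qed.

Definition divergence (T : finType) (P Q : T -> R) : R :=
  \sum_t P t * ln (P t / Q t).

Lemma divergence_ge0 (T : finType) (P Q : T -> R) :
  (forall t, 0 <= P t) -> (forall t, 0 <= Q t) -> \sum_t Q t <= \sum_t P t ->
  (forall t, 0 < P t -> 0 < Q t) -> 0 <= divergence P Q.
Proof.
move=> P_ge0 Q_ge0 sumQP PQ.
apply: (@le_trans _ _ (\sum_t (P t - Q t))); first by rewrite sumrB subr_ge0.
apply: ler_sum => t _.
have [Pt_gt0|Pt_le0] := ltrP 0 (P t); first exact: subr_le_mul_ln_div (PQ _ Pt_gt0).
have -> : P t = 0 by apply/eqP; rewrite eq_le Pt_le0 P_ge0.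
by rewrite mul0r sub0r oppr_le0.
Qed.

End Divergence.

Section AlternatingOptimization.
Variables (R : realType) (X Y : finType) (a : R) (p : X -> R) (W : X -> Y -> R).
Hypotheses (a_gt1 : 1 < a) (p_dist : is_dist p) (W_channel : is_channel W).

Let K := a / (a - 1).

Lemma K_gt0 : 0 < K.
Proof. by rewrite divr_gt0 ?subr_gt0 // (lt_trans ltr01). Qed.

Lemma K_ge1 : 1 <= K.
Proof. by rewrite /K ler_pdivlMr ?subr_gt0 // mul1r lerBlDr lerDl. Qed.

Lemma div_1Ba : a / (1 - a) = - K.
Proof. by rewrite /K -mulrN -invrN opprB. Qed.

Lemma upd_exponent : 1 - a^-1 = K^-1.
Proof.
have a0 : a != 0 by rewrite gt_eqF // (lt_trans ltr01).
by rewrite /K invf_div; field.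
Qed.

Lemma p_ge0 x : 0 <= p x. Proof. exact: p_dist.1. Qed.
Lemma W_ge0 x y : 0 <= W x y. Proof. exact: (W_channel x).1. Qed.

Lemma exists_W_gt0 x : exists y, 0 < W x y.
Proof.
apply/not_existsP => W_le0.
have : \sum_y W x y = 0.
  apply: big1 => y _; apply/eqP; rewrite eq_le W_ge0 andbT leNgt.
  exact/negP/W_le0.
by rewrite (W_channel x).2 => /eqP; rewrite oner_eq0.
Qed.

Definition upd_norm (r : Y -> X -> R) (x : X) : R :=
  \sum_y W x y * r y x `^ (1 - a^-1).

Definition marginal (q : X -> Y -> R) (y : Y) : R := \sum_x p x * q x y.

Definition joint (q : X -> Y -> R) (u : X * Y) : R := p u.1 * q u.1 u.2.

Definition rev_joint (q : X -> Y -> R) (r : Y -> X -> R) (u : X * Y) : R :=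
  marginal q u.2 * r u.2 u.1.

Section Update.
Variables (r : Y -> X -> R) (x : X).
Hypothesis r_gt0 : forall y, 0 < W x y -> 0 < r y x.

Lemma upd_ge0 y : 0 <= upd a W r x y.
Proof.
by rewrite divr_ge0 ?sumr_ge0 // => *; rewrite mulr_ge0 ?W_ge0 ?powR_ge0.
Qed.

Lemma upd_norm_gt0 : 0 < upd_norm r x.
Proof.
have [y Wxy_gt0] := exists_W_gt0 x.
rewrite /upd_norm (bigD1 y) //= ltr_pwDl ?mulr_gt0 ?powR_gt0 ?r_gt0 //.
by rewrite sumr_ge0 // => *; rewrite mulr_ge0 ?W_ge0 ?powR_ge0.
Qed.

Lemma upd_sum1 : \sum_y upd a W r x y = 1.
Proof. by rewrite /upd -big_distrl /= divff // gt_eqF // upd_norm_gt0. Qed.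

Lemma upd_gt0 y : 0 < W x y -> 0 < upd a W r x y.
Proof.
by move=> Wxy_gt0; rewrite divr_gt0 ?mulr_gt0 ?powR_gt0 ?r_gt0 ?upd_norm_gt0.
Qed.

Lemma ln_upd y : 0 < W x y ->
  ln (upd a W r x y) = ln (W x y) + K^-1 * ln (r y x) - ln (upd_norm r x).
Proof.
move=> Wxy_gt0; rewrite /upd -/(upd_norm r x).
rewrite ln_div ?posrE ?mulr_gt0 ?powR_gt0 ?r_gt0 ?upd_norm_gt0 //.
by rewrite lnM ?posrE ?powR_gt0 ?r_gt0 // ln_powR upd_exponent.
Qed.

End Update.

Section Reverse.
Variables (q : X -> Y -> R) (x : X) (y : Y).
Hypothesis q_ge0 : forall x y, 0 <= q x y.

Lemma marginal_ge0 : 0 <= marginal q y.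
Proof. by rewrite sumr_ge0 // => *; rewrite mulr_ge0 ?p_ge0. Qed.

Hypotheses (px_gt0 : 0 < p x) (qxy_gt0 : 0 < q x y).

Lemma marginal_gt0 : 0 < marginal q y.
Proof.
rewrite /marginal (bigD1 x) //= ltr_pwDl ?mulr_gt0 //.
by rewrite sumr_ge0 // => *; rewrite mulr_ge0 ?p_ge0.
Qed.

Lemma rev_of_gt0 : 0 < rev_of p q y x.
Proof. by rewrite divr_gt0 ?mulr_gt0 ?marginal_gt0. Qed.

Lemma ln_rev_of :
  ln (rev_of p q y x) = ln (p x) + ln (q x y) - ln (marginal q y).
Proof. by rewrite ln_div ?posrE ?mulr_gt0 ?marginal_gt0 // lnM. Qed.

End Reverse.

Lemma FC_pairE (q : X -> Y -> R) (r : Y -> X -> R) : FC a p W q r =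
  \sum_u (a / (1 - a) * (joint q u * ln (q u.1 u.2 / W u.1 u.2))
          + joint q u * ln (r u.2 u.1 / p u.1)).
Proof. by rewrite /FC /KL_joint !pair_bigA mulr_sumr -big_split. Qed.

Lemma sum_joint_fst (q : X -> Y -> R) (c : X -> R) :
  (forall x, 0 < p x -> \sum_y q x y = 1) ->
  \sum_u joint q u * c u.1 = \sum_x p x * c x.
Proof.
move=> q_sum1; rewrite -(pair_bigA _ (fun x y => joint q (x, y) * c x)) /=.
apply: eq_bigr => x _; rewrite /joint /= -big_distrl -big_distrr /=.
have [px_gt0|px_le0] := ltrP 0 (p x); first by rewrite q_sum1 ?mulr1.
have -> : p x = 0 by apply/eqP; rewrite eq_le px_le0 p_ge0.
by rewrite !mul0r.
Qed.

Lemma sum_joint (q : X -> Y -> R) :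
  (forall x, 0 < p x -> \sum_y q x y = 1) -> \sum_u joint q u = 1.
Proof.
move=> q_sum1; rewrite -p_dist.2 -(eq_bigr _ (fun u _ => mulr1 (joint q u))).
by rewrite -(eq_bigr _ (fun x _ => mulr1 (p x))); apply: sum_joint_fst.
Qed.

Lemma sum_rev_joint (q : X -> Y -> R) (r : Y -> X -> R) :
  is_revchannel r -> \sum_u rev_joint q r u = \sum_u joint q u.
Proof.
move=> r_rev; rewrite -(pair_bigA _ (fun x y => rev_joint q r (x, y))).
rewrite -(pair_bigA _ (fun x y => joint q (x, y))) /=.
rewrite exchange_big [in RHS]exchange_big /=.
by apply: eq_bigr => y _; rewrite /rev_joint /= -big_distrr /= (r_rev y).2 mulr1.
Qed.

Lemma joint_ge0 (q : X -> Y -> R) :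
  (forall x y, 0 <= q x y) -> forall u, 0 <= joint q u.
Proof. by move=> q_ge0 u; rewrite mulr_ge0 ?p_ge0. Qed.

Lemma FC_upd (r : Y -> X -> R) :
  (forall x, 0 < p x -> forall y, 0 < W x y -> 0 < r y x) ->
  FC a p W (upd a W r) r = \sum_x p x * (K * ln (upd_norm r x) - ln (p x)).
Proof.
move=> r_gt0.
rewrite FC_pairE -(sum_joint_fst _ (fun x px_gt0 => upd_sum1 (r_gt0 x px_gt0))).
apply: eq_bigr => -[x y] _ /=; rewrite /joint /=.
have [Wxy_gt0|Wxy_le0] := ltrP 0 (W x y); last first.
  have Wxy0 : W x y = 0 by apply/eqP; rewrite eq_le Wxy_le0 W_ge0.
  have -> : upd a W r x y = 0 by rewrite /upd Wxy0 !mul0r.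
  by rewrite !(mulr0, mul0r) addr0.
have [px_gt0|px_le0] := ltrP 0 (p x); last first.
  have -> : p x = 0 by apply/eqP; rewrite eq_le px_le0 p_ge0.
  by rewrite !(mulr0, mul0r) addr0.
have rx_gt0 := r_gt0 x px_gt0.
rewrite div_1Ba ln_div ?posrE ?(upd_gt0 rx_gt0) // (ln_upd rx_gt0 Wxy_gt0).
rewrite ln_div ?posrE ?rx_gt0 //.
by field; rewrite gt_eqF ?K_gt0.
Qed.

Section Gap.
Variables (q qopt : X -> Y -> R) (ropt : Y -> X -> R).
Hypotheses (q_ge0 : forall x y, 0 <= q x y)
  (q_gt0 : forall x, 0 < p x -> forall y, 0 < W x y -> 0 < q x y)
  (q_sum1 : forall x, 0 < p x -> \sum_y q x y = 1)
  (qopt_channel : is_channel qopt) (ropt_revchannel : is_revchannel ropt)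
  (qopt_ropt_adm : admissible p W qopt ropt).

Let qopt_ge0 x y : 0 <= qopt x y := (qopt_channel x).1 y.

Lemma rev_of_support x : 0 < p x -> forall y, 0 < W x y -> 0 < rev_of p q y x.
Proof.
by move=> px_gt0 y Wxy_gt0; apply: rev_of_gt0 q_ge0 px_gt0 (q_gt0 px_gt0 Wxy_gt0).
Qed.

Lemma joint_support x y : 0 < joint qopt (x, y) ->
  [/\ 0 < p x, 0 < qopt x y, 0 < W x y & 0 < ropt y x].
Proof.
rewrite /joint /= mulr_ge0_gt0 ?p_ge0 ?qopt_ge0 // => /andP[px_gt0 qo_gt0].
by have [] := qopt_ropt_adm px_gt0 qo_gt0.
Qed.

Lemma FC_gap :
  FC a p W qopt ropt - FC a p W (upd a W (rev_of p q)) (rev_of p q)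
  + (K - 1) * divergence (joint qopt) (joint q)
  + divergence (joint qopt) (rev_joint q ropt)
  = K * \sum_x \sum_y p x * qopt x y * ln (upd a W (rev_of p q) x y / q x y).
Proof.
rewrite FC_upd; last exact: rev_of_support.
rewrite -(sum_joint_fst _ (fun x _ => (qopt_channel x).2)) FC_pairE /divergence.
rewrite pair_bigA !mulr_sumr -sumrB -!big_split /=.
apply: eq_bigr => -[x y] _.
have [|P_le0] := ltrP 0 (joint qopt (x, y)); last first.
  have P0 : joint qopt (x, y) = 0.
    by apply/le_anti; rewrite P_le0 joint_ge0.
  rewrite -[p x * qopt x y]/(joint qopt (x, y)) P0.
  by rewrite !(mul0r, mulr0) subr0 !addr0.
move=> /joint_support[px_gt0 qo_gt0 Wxy_gt0 ro_gt0].
rewrite /joint /rev_joint /=.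
have qxy_gt0 := q_gt0 px_gt0 Wxy_gt0.
have rx_gt0 := rev_of_support px_gt0.
rewrite [ln (upd _ _ _ _ _ / _)]ln_div ?posrE ?(upd_gt0 rx_gt0) //.
rewrite (ln_upd rx_gt0 Wxy_gt0) (ln_rev_of q_ge0 px_gt0 qxy_gt0).
rewrite !ln_div ?posrE ?mulr_gt0 ?(marginal_gt0 q_ge0 px_gt0 qxy_gt0) //.
rewrite !lnM ?posrE ?(marginal_gt0 q_ge0 px_gt0 qxy_gt0) // div_1Ba.
by field; rewrite gt_eqF ?K_gt0.
Qed.

Lemma divergence_joint_ge0 : 0 <= divergence (joint qopt) (joint q).
Proof.
apply: divergence_ge0; [exact: joint_ge0 | exact: joint_ge0 | |].
- by rewrite !sum_joint // => x _; apply: (qopt_channel x).2.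
- by move=> -[x y] /joint_support[px_gt0 _ Wxy_gt0 _]; rewrite mulr_gt0 ?q_gt0.
Qed.

Lemma divergence_rev_joint_ge0 : 0 <= divergence (joint qopt) (rev_joint q ropt).
Proof.
apply: divergence_ge0; first exact: joint_ge0.
- by move=> u; rewrite mulr_ge0 ?marginal_ge0 ?(ropt_revchannel _).1.
- by rewrite sum_rev_joint // !sum_joint // => x _; apply: (qopt_channel x).2.
move=> -[x y] /joint_support[px_gt0 _ Wxy_gt0 ro_gt0].
by rewrite mulr_gt0 ?(marginal_gt0 q_ge0 px_gt0 (q_gt0 px_gt0 Wxy_gt0)).
Qed.

End Gap.

Section Iterates.
Variable q0 : X -> Y -> R.
Hypotheses (q0_channel : is_channel q0)
  (q0_gt0 : forall x y, 0 < W x y -> 0 < q0 x y).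

Lemma qiter_ge0 k x y : 0 <= qiter a p W q0 k x y.
Proof. by case: k => [|k] /=; [apply: (q0_channel x).1 | apply: upd_ge0]. Qed.

Lemma qiter_gt0 k x : 0 < p x -> forall y, 0 < W x y -> 0 < qiter a p W q0 k x y.
Proof.
elim: k x => [|k IH] x px_gt0 y Wxy_gt0; first exact: q0_gt0.
exact (upd_gt0 (rev_of_support (qiter_ge0 k) IH px_gt0) Wxy_gt0).
Qed.

Lemma qiter_sum1 k x : 0 < p x -> \sum_y qiter a p W q0 k x y = 1.
Proof.
case: k => [|k] px_gt0; first exact: (q0_channel x).2.
exact: upd_sum1 (rev_of_support (qiter_ge0 k) (@qiter_gt0 k) px_gt0).
Qed.

End Iterates.

End AlternatingOptimization.

Theorem lemma4 (R : realType) (X Y : finType) (a : R) (p : X -> R)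
  (W q0 qopt : X -> Y -> R) (ropt : Y -> X -> R) (k : nat) :
  1 < a ->
  is_dist p -> is_channel W ->
  is_channel q0 -> (forall x y, 0 < W x y -> 0 < q0 x y) ->
  is_channel qopt -> is_revchannel ropt -> admissible p W qopt ropt ->
  (forall (q : X -> Y -> R) (r : Y -> X -> R),
      is_channel q -> is_revchannel r -> admissible p W q r ->
      FC a p W q r <= FC a p W qopt ropt) ->
  FC a p W qopt ropt
    - FC a p W (qiter a p W q0 k.+1) (rev_of p (qiter a p W q0 k))
  <= a / (a - 1) *
     \sum_(x : X) \sum_(y : Y)
        p x * qopt x y * ln (qiter a p W q0 k.+1 x y / qiter a p W q0 k x y).
Proof.
move=> a_gt1 p_dist W_channel q0_channel q0_gt0 qopt_channel ropt_rev adm _.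
change (qiter a p W q0 k.+1) with (upd a W (rev_of p (qiter a p W q0 k))).
set q := qiter a p W q0 k.
have q_ge0 : forall x y, 0 <= q x y by move=> x y; exact: qiter_ge0.
have q_gt0 : forall x, 0 < p x -> forall y, 0 < W x y -> 0 < q x y.
  by move=> x px_gt0 y Wxy_gt0; exact: qiter_gt0.
have q_sum1 : forall x, 0 < p x -> \sum_y q x y = 1.
  by move=> x px_gt0; exact: qiter_sum1.
have gap := FC_gap a_gt1 p_dist W_channel q_ge0 q_gt0 qopt_channel adm.
have D1 := divergence_joint_ge0 p_dist q_ge0 q_gt0 q_sum1 qopt_channel adm.
have D2 := divergence_rev_joint_ge0 p_dist q_ge0 q_gt0 q_sum1 qopt_channel ropt_rev adm.
have K1 : 0 <= a / (a - 1) - 1 by rewrite subr_ge0 K_ge1.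
have := mulr_ge0 K1 D1.
lra.
Qed.
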